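(* Let $p$ be a prime and let $G$ be a non-cyclic finite abelian $p$-group of exponent $\exp(G)=p^{\alpha}$, where $\alpha\ge 2$. Then $n_G\ge p^{\alpha+1}-p^{\alpha}+p^{\alpha-1}$. As a consequence, $n_G>\exp(G)$.
   Context: For a finite group $G$ and $x\in G$, let $I_{\mathcal C}(x)=\{y\in G : \langle x,y\rangle \text{ is cyclic}\}$. For a nontrivial finite group $G$, $n_G=\max\{|I_{\mathcal C}(x)| : x\in G\setminus\{1\}\}$. *)

From mathcomp Require Import all_boot all_fingroup all_solvable.
Set Implicit Arguments. Unset Strict Implicit. Unset Printing Implicit Defensive.
Local Open Scope group_scope.

Definition cyclicizer (gT : finGroupType) (G : {set gT}) (x : gT) : {set gT} :=
  [set y in G | cyclic <<[set x; y]>>].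

Definition nG (gT : finGroupType) (G : {set gT}) : nat :=
  \max_(x in G^#) #|cyclicizer G x|.

From mathcomp Require Import all_boot all_fingroup all_solvable.
From mathcomp Require Import zify.

(* Take g of order exp(G) = p^alpha, h of order p outside <g>, and let
   x = g^(p^(alpha-1)) span the subgroup of order p of <g>.  Every y in
   <g><h> but not in <g^p><h> is g^i h^j with p not dividing i, so y^(p^(alpha-1))
   = x^i generates <x> and <x, y> = <y> is cyclic; every y in <g^p> lies with x
   in the cyclic group <g>.  These two disjoint sets have
   p^(alpha+1) - p^alpha and p^(alpha-1) elements. *)

Set Implicit Arguments. Unset Strict Implicit. Unset Printing Implicit Defensive.
Local Open Scope group_scope.

Section Cyclicizer.

Variables (gT : finGroupType) (G : {group gT}).

Lemma cyclic_subset_cyclicizer (C : {group gT}) x :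
  cyclic C -> x \in C -> C \subset G -> C \subset cyclicizer G x.
Proof.
move=> cycC xC sCG; apply/subsetP=> y yC.
rewrite inE (subsetP sCG) //=; apply: cyclicS cycC.
by rewrite gen_subG subUset !sub1set xC yC.
Qed.

Lemma card_cyclicizer_le_nG x : x \in G^# -> #|cyclicizer G x| <= nG G.
Proof. exact: leq_bigmax_cond. Qed.

End Cyclicizer.

Section PrimeOrderComplement.

Variables (gT : finGroupType) (p : nat) (g h : gT).
Hypotheses (p_pr : prime p) (oh : #[h] = p) (h_notin_g : h \notin <[g]>).

Lemma card_mul_cycle_notin (A : {group gT}) :
  A \subset <[g]> -> #|A * <[h]>| = (#|A| * p)%N.
Proof.
move=> sAg; rewrite TI_cardMg -?orderE ?oh // setIC prime_TIg -?orderE ?oh //.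
by apply: contra h_notin_g => /subset_trans/(_ sAg); rewrite cycle_subG.
Qed.

Hypothesis cgh : commute g h.

Lemma expg_mem_cycle_mulD n y :
  #[g ^+ (p ^ n.+1)] = p ->
  y \in (<[g]> * <[h]>) :\: (<[g ^+ p]> * <[h]>) -> g ^+ (p ^ n.+1) \in <[y]>.
Proof.
set x := g ^+ _ => ox /setDP[/mulsgP[_ _ /cycleP[i ->] /cycleP[j ->] ->] yM].
have p_ndvd_i : ~~ (p %| i).
  by apply: contra yM => /dvdnP[q ->]; rewrite mulnC expgM mem_mulg ?mem_cycle.
have hj_p : (h ^+ j) ^+ (p ^ n.+1) = 1.
  by rewrite -expgM mulnC expgM expnS expgM -oh expg_order !expg1n.
have yx : (g ^+ i * h ^+ j) ^+ (p ^ n.+1) = x ^+ i.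
  by rewrite expgMn ?hj_p ?mulg1 -?expgM 1?mulnC //; apply: commuteX2.
have gen_x : generator <[x]> (x ^+ i) by rewrite generator_coprime ox prime_coprime.
by rewrite -cycle_subG (eqP gen_x) -yx cycleX.
Qed.

End PrimeOrderComplement.

Lemma exists_prime_order_notin_cycle (gT : finGroupType) (G : {group gT})
    (p : nat) (g : gT) :
  p.-group G -> abelian G -> ~~ cyclic G ->
  exists2 h, h \in G & #[h] = p /\ h \notin <[g]>.
Proof.
move=> pG abG ncycG.
have : 1 < 'r_p(G) by rewrite -(rank_pgroup pG) ltnNge -abelian_rank1_cyclic.
case/p_rank_geP=> E /pnElemP[sEG abelE rE].
have /subsetPn[h hE h_notin_g] : ~~ (E \subset <[g]>).
  apply: contra ncycG => sEg; move: (cyclicS sEg (cycle_cyclic g)).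
  by rewrite (abelem_cyclic abelE) rE.
have h_nt : h != 1 by apply: contraNneq h_notin_g => ->; apply: group1.
by exists h; rewrite ?(subsetP sEG) ?(abelem_order_p abelE).
Qed.

Lemma nG_lower_bound (gT : finGroupType) (G : {group gT}) p n g h :
  prime p -> abelian G -> g \in G -> h \in G -> #[g] = (p ^ n.+2)%N ->
  #[h] = p -> h \notin <[g]> -> p ^ n.+3 - p ^ n.+2 + p ^ n.+1 <= nG G.
Proof.
move=> p_pr abG gG hG og oh h_notin_g.
set x := g ^+ (p ^ n.+1).
have ox : #[x] = p by rewrite (orderXexp _ og) subSnn.
have ogp : #[g ^+ p] = (p ^ n.+1)%N by rewrite -{1}(expn1 p) (orderXexp _ og).
set H := <[g]> * <[h]>; set M := <[g ^+ p]> * <[h]>.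
have sHG : H \subset G by rewrite -(mulGid G) mulgSS ?cycle_subG.
have cycgp_M : <[g ^+ p]> \subset M by apply: mulG_subl.
have cyc_sub : (H :\: M) :|: <[g ^+ p]> \subset cyclicizer G x.
  rewrite subUset; apply/andP; split.
    apply/subsetP=> y yHM; have yG := subsetP sHG y (subsetP (subsetDl H M) y yHM).
    apply: (subsetP (cyclic_subset_cyclicizer _ _ _)) (cycle_id y);
      rewrite ?cycle_cyclic ?cycle_subG //.
    by apply: expg_mem_cycle_mulD yHM => //; apply: (centsP abG).
  apply: subset_trans (cycleX g p) (cyclic_subset_cyclicizer _ _ _);
    by rewrite ?cycle_cyclic ?mem_cycle ?cycle_subG.
have x_nt : x \in G^# by rewrite !inE groupX // -order_eq1 ox eqn_leq leqNgt prime_gt1.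
apply: leq_trans (card_cyclicizer_le_nG x_nt).
apply: leq_trans (subset_leq_card cyc_sub).
have disj : (H :\: M) :&: <[g ^+ p]> = set0.
  by apply/eqP; rewrite setIDAC setD_eq0 subIset // cycgp_M orbT.
rewrite cardsU disj cards0 subn0 cardsDS ?mulSg ?cycleX //.
have cardM := card_mul_cycle_notin p_pr oh h_notin_g.
by rewrite !cardM ?cycleX // -!orderE og ogp -!expnSr.
Qed.

Lemma exp_lt_sub_add p n : 1 < p -> p ^ n.+1 < p ^ n.+2 - p ^ n.+1 + p ^ n.
Proof.
move=> p_gt1; have pn_gt0 : 0 < p ^ n by rewrite expn_gt0 ltnW.
rewrite !expnS; nia.
Qed.

Theorem lemma2p4 (gT : finGroupType) (G : {group gT}) (p alpha : nat) :
  prime p -> p.-group G -> abelian G -> ~~ cyclic G ->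
  exponent G = (p ^ alpha)%N -> (2 <= alpha)%N ->
  (p ^ alpha.+1 - p ^ alpha + p ^ alpha.-1 <= nG G)%N /\ (exponent G < nG G)%N.
Proof.
move=> p_pr pG abG ncycG expG; case: alpha expG => [|[|n]] // expG _.
have [g gG og] := exponent_witness (pgroup_nil pG).
have [h hG [oh h_notin_g]] := exists_prime_order_notin_cycle g pG abG ncycG.
have bound := nG_lower_bound p_pr abG gG hG (etrans (esym og) expG) oh h_notin_g.
split=> //; rewrite expG; apply: leq_trans bound.
exact/exp_lt_sub_add/prime_gt1.
Qed.
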